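(* Let $\Phi(x_1,\dots,x_n)$ be an open formula of the language $\mathcal{L}_{\mathrm{pAb}}$ with $n$ variables, and let $N=\sharp(\Phi)$. Assume that $\mathbf{R}_{-1}\models\exists x_1\cdots\exists x_n\,\Phi$. Then there are integers $c$ and $M$ and real numbers $a_1,\dots,a_n$ such that $\Phi(a_1,\dots,a_n)$ holds in $\mathbf{R}_{-1}$, $-2^M\le a_i\le 2^M$ for each $1\le i\le n$, and the binary representation of $M$ has at most $cN\log_2 N$ bits.
   Context: $\mathcal{L}_{\mathrm{pAb}}=\langle +,-,0,-1,\wedge,\vee\rangle$ is the language of pointed abelian lattice-ordered groups. $\mathbf{R}_{-1}=\langle \mathbb{R},+,-,\wedge,\vee,0,-1\rangle$ is the additive group of the reals with $\wedge=\min$, $\vee=\max$, and constant $-1$ interpreted as $-1$. An open formula is a finite Boolean combination (negation, conjunction, disjunction) of atoms $\phi=\psi$ with $\phi,\psi$ terms. The size $\sharp(\phi)$ of a term is the number of occurrences of variables and constants in $\phi$; the size $\sharp(\Phi)$ of an open formula is the sum of the sizes of all occurrences of terms in its atoms. *)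

From Stdlib Require Import Reals ZArith List.
Open Scope R_scope.

Inductive term : Type :=
  | TVar : nat -> term
  | TZero : term
  | TMinusOne : term
  | TAdd : term -> term -> term
  | TNeg : term -> term
  | TMeet : term -> term -> term
  | TJoin : term -> term -> term.

Inductive oformula : Type :=
  | FAtom : term -> term -> oformula
  | FNot : oformula -> oformula
  | FAnd : oformula -> oformula -> oformula
  | FOr : oformula -> oformula -> oformula.

Fixpoint teval (a : nat -> R) (t : term) : R :=
  match t with
  | TVar i => a i
  | TZero => 0
  | TMinusOne => -1
  | TAdd t1 t2 => teval a t1 + teval a t2
  | TNeg t1 => - teval a t1
  | TMeet t1 t2 => Rmin (teval a t1) (teval a t2)
  | TJoin t1 t2 => Rmax (teval a t1) (teval a t2)
  end.

Fixpoint holds (a : nat -> R) (f : oformula) : Prop :=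
  match f with
  | FAtom t1 t2 => teval a t1 = teval a t2
  | FNot g => ~ holds a g
  | FAnd g h => holds a g /\ holds a h
  | FOr g h => holds a g \/ holds a h
  end.

Fixpoint tsize (t : term) : nat :=
  match t with
  | TVar _ | TZero | TMinusOne => 1%nat
  | TAdd t1 t2 | TMeet t1 t2 | TJoin t1 t2 => (tsize t1 + tsize t2)%nat
  | TNeg t1 => tsize t1
  end.

Fixpoint fsize (f : oformula) : nat :=
  match f with
  | FAtom t1 t2 => (tsize t1 + tsize t2)%nat
  | FNot g => fsize g
  | FAnd g h | FOr g h => (fsize g + fsize h)%nat
  end.

Fixpoint tvars_below (n : nat) (t : term) : Prop :=
  match t with
  | TVar i => (i < n)%nat
  | TZero | TMinusOne => True
  | TAdd t1 t2 | TMeet t1 t2 | TJoin t1 t2 => tvars_below n t1 /\ tvars_below n t2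
  | TNeg t1 => tvars_below n t1
  end.

Fixpoint fvars_below (n : nat) (f : oformula) : Prop :=
  match f with
  | FAtom t1 t2 => tvars_below n t1 /\ tvars_below n t2
  | FNot g => fvars_below n g
  | FAnd g h | FOr g h => fvars_below n g /\ fvars_below n h
  end.

(* Number of bits of the binary representation of an integer M
   (of its absolute value; 0 is written with one bit). *)
Definition nbits (M : Z) : Z := (Z.log2 (Z.abs M) + 1)%Z.

Definition log2R (x : R) : R := ln x / ln 2.

(* The truth value of Phi at a point is determined by the signs there of finitely
   many affine forms with integer coefficients: on each region of constant signs
   every term equals one of its affine "pieces", and it suffices to know the
   signs of the differences of the two sides of each atom and of the two
   arguments of each meet and join.  All these forms have norm at most N.
   Fourier-Motzkin elimination of a variable x_j replaces a set of forms of norm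
   at most W by the forms with x_j dropped and the pairwise eliminants of x_j,
   of norm at most 2W^2+1.  A point with the right signs for the new set extends
   to one with the right signs for the old set by choosing x_j in the right cut
   of the zeros of the old forms, and these zeros are bounded in terms of the
   point.  Iterating over the at most N variables gives a witness bounded by
   2^((2^N - 1)(N+2)), so M = 2^(2N+2) works, and it has 2N+3 bits. *)

From Stdlib Require Import Reals ZArith Lra Lia List Classical.
Import ListNotations.
Open Scope R_scope.

Definition same_sign (x y : R) : Prop :=
  (x < 0 /\ y < 0) \/ (x = 0 /\ y = 0) \/ (0 < x /\ 0 < y).

Lemma same_sign_refl x : same_sign x x.
Proof. unfold same_sign. destruct (total_order_T x 0) as [[h|h]|h]; lra. Qed.

Lemma same_sign_scale k x y : same_sign x y -> same_sign (k * x) (k * y).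
Proof.
  unfold same_sign. intros H. destruct (total_order_T k 0) as [[h|h]|h]; [nra|subst; lra|nra].
Qed.

Lemma same_sign_unscale k x y : k <> 0 -> same_sign (k * x) (k * y) -> same_sign x y.
Proof.
  intros Hk H. apply (same_sign_scale (/ k)) in H.
  now rewrite <- !Rmult_assoc, Rinv_l, !Rmult_1_l in H.
Qed.

Lemma Rabs_le_iff x K : Rabs x <= K <-> - K <= x <= K.
Proof. unfold Rabs; destruct (Rcase_abs x); split; intros; lra. Qed.

Lemma Rmin_same_sign x1 x2 y1 y2 : same_sign (x1 - x2) (y1 - y2) ->
  (Rmin x1 x2 = x1 /\ Rmin y1 y2 = y1) \/ (Rmin x1 x2 = x2 /\ Rmin y1 y2 = y2).
Proof.
  unfold same_sign, Rmin. intros H.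
  destruct (Rle_dec x1 x2), (Rle_dec y1 y2); lra.
Qed.

Lemma Rmax_same_sign x1 x2 y1 y2 : same_sign (x1 - x2) (y1 - y2) ->
  (Rmax x1 x2 = x1 /\ Rmax y1 y2 = y1) \/ (Rmax x1 x2 = x2 /\ Rmax y1 y2 = y2).
Proof.
  unfold same_sign, Rmax. intros H.
  destruct (Rle_dec x1 x2), (Rle_dec y1 y2); lra.
Qed.

Lemma list_argmax {A} (h : A -> R) (P : A -> Prop) (L : list A) :
  (forall f, In f L -> ~ P f) \/
  exists l, In l L /\ P l /\ forall f, In f L -> P f -> h f <= h l.
Proof.
  induction L as [|x L [IH|[l [Hl [Pl Hmax]]]]].
  - left. intros f [].
  - destruct (classic (P x)) as [Px|Px].
    + right. exists x. split; [now left|split; [exact Px|]].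
      intros f [<-|Hf] Pf; [lra|exfalso; exact (IH f Hf Pf)].
    + left. intros f [<-|Hf]; auto.
  - right. destruct (classic (P x /\ h l < h x)) as [[Px Hx]|Hx].
    + exists x. split; [now left|split; [exact Px|]].
      intros f [<-|Hf] Pf; [lra|specialize (Hmax f Hf Pf); lra].
    + exists l. split; [now right|split; [exact Pl|]].
      intros f [<-|Hf] Pf; [|auto]. apply Rnot_lt_le. tauto.
Qed.

Lemma exists_same_cut {A} (T : list A) (ta tb : A -> R) (x K : R) :
  0 <= K -> (forall f, In f T -> Rabs (tb f) <= K) ->
  (forall f g, In f T -> In g T -> same_sign (ta g - ta f) (tb g - tb f)) ->
  exists y, Rabs y <= K + 1 /\ forall f, In f T -> same_sign (x - ta f) (y - tb f).
Proof.
  intros HK Hb Hord.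
  destruct (classic (exists g, In g T /\ ta g = x)) as [[g [Hg <-]]|Hx].
  { exists (tb g). split; [specialize (Hb g Hg); lra|]. intros f Hf. now apply Hord. }
  assert (Hlt : forall f, In f T -> ta f < x \/ x < ta f).
  { intros f Hf. destruct (Rtotal_order (ta f) x) as [h|[h|h]]; auto.
    exfalso. apply Hx. eauto. }
  setoid_rewrite Rabs_le_iff in Hb.
  destruct (list_argmax ta (fun f => ta f < x) T) as [HL|[l [Hl [Pl Ml]]]];
  destruct (list_argmax (fun f => - ta f) (fun f => x < ta f) T) as [HU|[u [Hu [Pu Mu]]]].
  - exists 0. split; [rewrite Rabs_R0; lra|].
    intros f Hf. exfalso. destruct (Hlt f Hf); [apply (HL f)|apply (HU f)]; auto.
  - exists (tb u - 1). split; [apply Rabs_le_iff; specialize (Hb u Hu); lra|].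
    intros f Hf. destruct (Hlt f Hf) as [h|h]; [now destruct (HL f Hf h)|].
    specialize (Mu f Hf h). specialize (Hord u f Hu Hf). unfold same_sign in *. lra.
  - exists (tb l + 1). split; [apply Rabs_le_iff; specialize (Hb l Hl); lra|].
    intros f Hf. destruct (Hlt f Hf) as [h|h]; [|now destruct (HU f Hf h)].
    specialize (Ml f Hf h). specialize (Hord f l Hf Hl). unfold same_sign in *. lra.
  - exists ((tb l + tb u) / 2).
    split; [apply Rabs_le_iff; pose proof (Hb l Hl); pose proof (Hb u Hu); lra|].
    pose proof (Hord l u Hl Hu).
    intros f Hf. destruct (Hlt f Hf) as [h|h].
    + specialize (Ml f Hf h). specialize (Hord f l Hf Hl). unfold same_sign in *. lra.
    + specialize (Mu f Hf h). specialize (Hord u f Hu Hf). unfold same_sign in *. lra.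
Qed.

(* A linear form is a list of (variable, coefficient) pairs; a variable may
   occur several times, its coefficient being the sum of its occurrences. *)
Definition lform := list (nat * Z).
Definition form := (lform * Z)%type.

Fixpoint leval (a : nat -> R) (l : lform) : R :=
  match l with [] => 0 | p :: l' => IZR (snd p) * a (fst p) + leval a l' end.

Fixpoint lnorm (l : lform) : Z :=
  match l with [] => 0%Z | p :: l' => (Z.abs (snd p) + lnorm l')%Z end.

Definition feval (a : nat -> R) (f : form) : R := leval a (fst f) + IZR (snd f).
Definition fnorm (f : form) : Z := (lnorm (fst f) + Z.abs (snd f))%Z.

Definition lscale (z : Z) (l : lform) : lform := map (fun p => (fst p, (z * snd p)%Z)) l.

Definition fadd (f g : form) : form := (fst f ++ fst g, (snd f + snd g)%Z).
Definition fscale (z : Z) (f : form) : form := (lscale z (fst f), (z * snd f)%Z).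
Definition fsub (f g : form) : form := fadd f (fscale (-1) g).

Lemma lnorm_nonneg l : (0 <= lnorm l)%Z.
Proof. induction l; simpl; lia. Qed.

Lemma fnorm_nonneg f : (0 <= fnorm f)%Z.
Proof. unfold fnorm. pose proof (lnorm_nonneg (fst f)). lia. Qed.

Lemma leval_app a l1 l2 : leval a (l1 ++ l2) = leval a l1 + leval a l2.
Proof. induction l1 as [|p l1 IH]; simpl; [ring|rewrite IH; ring]. Qed.

Lemma lnorm_app l1 l2 : lnorm (l1 ++ l2) = (lnorm l1 + lnorm l2)%Z.
Proof. induction l1 as [|p l1 IH]; simpl; [lia|rewrite IH; lia]. Qed.

Lemma leval_scale a z l : leval a (lscale z l) = IZR z * leval a l.
Proof. induction l as [|p l IH]; simpl; [ring|rewrite IH, mult_IZR; ring]. Qed.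

Lemma lnorm_scale z l : lnorm (lscale z l) = (Z.abs z * lnorm l)%Z.
Proof. induction l as [|p l IH]; simpl; [lia|rewrite IH, Z.abs_mul; ring]. Qed.

Lemma feval_add a f g : feval a (fadd f g) = feval a f + feval a g.
Proof. unfold feval, fadd; simpl. rewrite leval_app, plus_IZR. ring. Qed.

Lemma feval_scale a z f : feval a (fscale z f) = IZR z * feval a f.
Proof. unfold feval, fscale; simpl. rewrite leval_scale, mult_IZR. ring. Qed.

Lemma feval_sub a f g : feval a (fsub f g) = feval a f - feval a g.
Proof. unfold fsub. rewrite feval_add, feval_scale. simpl (IZR (-1)). ring. Qed.

Lemma fnorm_add f g : (fnorm (fadd f g) <= fnorm f + fnorm g)%Z.
Proof. unfold fnorm, fadd; simpl. rewrite lnorm_app. lia. Qed.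

Lemma fnorm_scale z f : fnorm (fscale z f) = (Z.abs z * fnorm f)%Z.
Proof. unfold fnorm, fscale; simpl. rewrite lnorm_scale, Z.abs_mul. ring. Qed.

Lemma fnorm_sub f g : (fnorm (fsub f g) <= fnorm f + fnorm g)%Z.
Proof.
  unfold fsub. pose proof (fnorm_add f (fscale (-1) g)). rewrite fnorm_scale in H. lia.
Qed.

Lemma leval_bound a l B : (forall i, Rabs (a i) <= B) ->
  Rabs (leval a l) <= IZR (lnorm l) * B.
Proof.
  intros HB. induction l as [|p l IH]; simpl.
  - rewrite Rabs_R0. lra.
  - rewrite plus_IZR. eapply Rle_trans; [apply Rabs_triang|].
    rewrite Rabs_mult, <- abs_IZR.
    assert (0 <= IZR (Z.abs (snd p))) by (apply IZR_le; lia).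
    pose proof (HB (fst p)). nra.
Qed.

Lemma feval_bound a f B : 0 <= B -> (forall i, Rabs (a i) <= B) ->
  Rabs (feval a f) <= IZR (fnorm f) * (B + 1).
Proof.
  intros H0 HB. unfold feval, fnorm. pose proof (leval_bound a (fst f) B HB).
  eapply Rle_trans; [apply Rabs_triang|]. rewrite <- abs_IZR, plus_IZR.
  assert (0 <= IZR (Z.abs (snd f))) by (apply IZR_le; lia).
  assert (0 <= IZR (lnorm (fst f))) by (apply IZR_le, lnorm_nonneg). nra.
Qed.

Definition inV (V : list nat) (f : form) : Prop := forall p, In p (fst f) -> In (fst p) V.

Lemma inV_add V f g : inV V f -> inV V g -> inV V (fadd f g).
Proof. intros Hf Hg p Hp. apply in_app_or in Hp as [Hp|Hp]; auto. Qed.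

Lemma inV_scale V z f : inV V f -> inV V (fscale z f).
Proof. intros Hf p Hp. apply in_map_iff in Hp as [q [<- Hq]]. exact (Hf q Hq). Qed.

Lemma inV_sub V f g : inV V f -> inV V g -> inV V (fsub f g).
Proof. intros. apply inV_add, inV_scale; assumption. Qed.

Lemma feval_nil_vars a b f : inV [] f -> feval a f = feval b f.
Proof.
  destruct f as [[|p l] c]; intros H; [reflexivity|].
  destruct (H p (or_introl eq_refl)).
Qed.

Definition agree (a b : nat -> R) (S : list form) : Prop :=
  forall f, In f S -> same_sign (feval a f) (feval b f).

Lemma agree_app a b S1 S2 : agree a b (S1 ++ S2) -> agree a b S1 /\ agree a b S2.
Proof. intros H; split; intros f Hf; apply H, in_or_app; auto. Qed.

Definition pairwise (op : form -> form -> form) (P Q : list form) : list form :=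
  map (fun pq => op (fst pq) (snd pq)) (list_prod P Q).

Lemma in_pairwise op P Q p q : In p P -> In q Q -> In (op p q) (pairwise op P Q).
Proof. intros. apply (in_map (fun pq => op (fst pq) (snd pq)) _ (p, q)), in_prod; auto. Qed.

Lemma in_pairwise_iff op P Q h :
  In h (pairwise op P Q) <-> exists p q, In p P /\ In q Q /\ h = op p q.
Proof.
  unfold pairwise. rewrite in_map_iff. split.
  - intros [[p q] [<- Hpq]]. apply in_prod_iff in Hpq. exists p, q. tauto.
  - intros (p & q & Hp & Hq & ->). exists (p, q). split; [reflexivity|now apply in_prod].
Qed.

Definition within (V : list nat) (W : Z) (S : list form) : Prop :=
  forall f, In f S -> inV V f /\ (fnorm f <= W)%Z.

Lemma within_app V W S1 S2 : within V W S1 -> within V W S2 -> within V W (S1 ++ S2).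
Proof. intros H1 H2 f Hf. apply in_app_or in Hf as [Hf|Hf]; auto. Qed.

Lemma within_weaken V W W' S : (W <= W')%Z -> within V W S -> within V W' S.
Proof. intros HW H f Hf. destruct (H f Hf). split; [assumption|lia]. Qed.

Lemma within_pairwise op V W1 W2 P Q :
  (forall p q, inV V p -> inV V q -> inV V (op p q)) ->
  (forall p q, (fnorm (op p q) <= fnorm p + fnorm q)%Z) ->
  within V W1 P -> within V W2 Q -> within V (W1 + W2) (pairwise op P Q).
Proof.
  intros Hv Hn HP HQ h Hh. apply in_pairwise_iff in Hh as (p & q & Hp & Hq & ->).
  destruct (HP p Hp), (HQ q Hq). split; [auto|]. pose proof (Hn p q). lia.
Qed.

Fixpoint lcoef (j : nat) (l : lform) : Z :=
  match l with
  | [] => 0%Z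
  | p :: l' => if Nat.eqb (fst p) j then (snd p + lcoef j l')%Z else lcoef j l'
  end.

Definition ldrop (j : nat) (l : lform) : lform := filter (fun p => negb (Nat.eqb (fst p) j)) l.

Definition coef (j : nat) (f : form) : Z := lcoef j (fst f).
Definition drop_var (j : nat) (f : form) : form := (ldrop j (fst f), snd f).

Definition upd (b : nat -> R) (j : nat) (y : R) : nat -> R :=
  fun i => if Nat.eqb i j then y else b i.

Lemma leval_ldrop a j l : leval a l = IZR (lcoef j l) * a j + leval a (ldrop j l).
Proof.
  induction l as [|p l IH]; simpl; [ring|].
  destruct (Nat.eqb_spec (fst p) j) as [->|]; simpl; rewrite IH, ?plus_IZR; ring.
Qed.

Lemma leval_upd b j y l : leval (upd b j y) l = IZR (lcoef j l) * y + leval b (ldrop j l).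
Proof.
  induction l as [|p l IH]; simpl; [ring|]. unfold upd at 1.
  destruct (Nat.eqb_spec (fst p) j); simpl; rewrite IH, ?plus_IZR; ring.
Qed.

Lemma lnorm_ldrop j l : (Z.abs (lcoef j l) + lnorm (ldrop j l) <= lnorm l)%Z.
Proof. induction l as [|p l IH]; simpl; [lia|]. destruct (Nat.eqb (fst p) j); simpl; lia. Qed.

Lemma feval_drop_var a j f : feval a f = IZR (coef j f) * a j + feval a (drop_var j f).
Proof. unfold feval, coef. rewrite (leval_ldrop a j). simpl. ring. Qed.

Lemma feval_upd b j y f :
  feval (upd b j y) f = IZR (coef j f) * y + feval b (drop_var j f).
Proof. unfold feval, coef. rewrite leval_upd. simpl. ring. Qed.

Lemma fnorm_drop_var j f : (Z.abs (coef j f) + fnorm (drop_var j f) <= fnorm f)%Z.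
Proof. unfold fnorm. pose proof (lnorm_ldrop j (fst f)). simpl. unfold coef. lia. Qed.

Lemma inV_drop_var V j f : inV (j :: V) f -> inV V (drop_var j f).
Proof.
  intros H p Hp. apply filter_In in Hp as [Hp Hj].
  destruct (H p Hp) as [e|e]; [|exact e].
  subst. rewrite Nat.eqb_refl in Hj. discriminate.
Qed.

Definition eliminant (j : nat) (f g : form) : form :=
  fsub (fscale (coef j g) (drop_var j f)) (fscale (coef j f) (drop_var j g)).

Definition eliminate (j : nat) (S : list form) : list form :=
  map (drop_var j) S ++ pairwise (eliminant j) S S.

Lemma eliminate_within V j W S :
  within (j :: V) W S -> within V (2 * W * W + 1) (eliminate j S).
Proof.
  intros HS h Hh. apply in_app_or in Hh as [Hh|Hh].
  - apply in_map_iff in Hh as [f [<- Hf]]. destruct (HS f Hf) as [Hv Hn].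
    split; [now apply inV_drop_var|].
    pose proof (fnorm_drop_var j f). nia.
  - apply in_pairwise_iff in Hh as (f & g & Hf & Hg & ->).
    destruct (HS f Hf) as [Hvf Hnf], (HS g Hg) as [Hvg Hng].
    split; [apply inV_sub; apply inV_scale, inV_drop_var; assumption|].
    unfold eliminant.
    pose proof (fnorm_sub (fscale (coef j g) (drop_var j f)) (fscale (coef j f) (drop_var j g))).
    rewrite !fnorm_scale in *.
    pose proof (fnorm_drop_var j f). pose proof (fnorm_drop_var j g).
    pose proof (fnorm_nonneg (drop_var j f)). pose proof (fnorm_nonneg (drop_var j g)).
    nia.
Qed.

Definition zero_of (j : nat) (b : nat -> R) (f : form) : R :=
  - feval b (drop_var j f) / IZR (coef j f).

Lemma zero_of_bound j b f B W : coef j f <> 0%Z -> 0 <= B ->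
  (forall i, Rabs (b i) <= B) -> (fnorm f <= W)%Z -> Rabs (zero_of j b f) <= IZR W * (B + 1).
Proof.
  intros Hc HB Hb HW. unfold zero_of.
  pose proof (feval_bound b (drop_var j f) B HB Hb).
  pose proof (fnorm_drop_var j f) as E. apply IZR_le in HW. apply IZR_le in E.
  rewrite plus_IZR, abs_IZR in E.
  assert (Hc1 : 1 <= Rabs (IZR (coef j f))).
  { rewrite <- abs_IZR. apply IZR_le. lia. }
  unfold Rdiv. rewrite Rabs_mult, Rabs_Ropp, Rabs_inv.
  apply Rle_trans with (Rabs (feval b (drop_var j f))).
  - rewrite <- (Rmult_1_r (Rabs (feval b (drop_var j f)))) at 2.
    apply Rmult_le_compat_l; [apply Rabs_pos|].
    rewrite <- Rinv_1. apply Rinv_le_contravar; lra.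
  - pose proof (Rabs_pos (IZR (coef j f))). nra.
Qed.

Lemma zero_of_order j a b f g : coef j f <> 0%Z -> coef j g <> 0%Z ->
  same_sign (feval a (eliminant j f g)) (feval b (eliminant j f g)) ->
  same_sign (zero_of j a g - zero_of j a f) (zero_of j b g - zero_of j b f).
Proof.
  intros Hf%not_0_IZR Hg%not_0_IZR Hs.
  unfold eliminant in Hs. rewrite !feval_sub, !feval_scale in Hs.
  (* scaled by [coef j f * coef j g], the difference of the zeros is the eliminant *)
  apply (same_sign_unscale (IZR (coef j f) * IZR (coef j g)));
    [now apply Rmult_integral_contrapositive|].
  unfold zero_of.
  replace (IZR (coef j f) * IZR (coef j g) * _) with
    (IZR (coef j g) * feval a (drop_var j f) - IZR (coef j f) * feval a (drop_var j g))
    by (field; auto).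
  replace (IZR (coef j f) * IZR (coef j g) * _) with
    (IZR (coef j g) * feval b (drop_var j f) - IZR (coef j f) * feval b (drop_var j g))
    by (field; auto).
  exact Hs.
Qed.

Lemma zero_of_cut j a b f y : coef j f <> 0%Z ->
  same_sign (a j - zero_of j a f) (y - zero_of j b f) ->
  same_sign (feval a f) (feval (upd b j y) f).
Proof.
  intros Hc%not_0_IZR Hs. apply (same_sign_scale (IZR (coef j f))) in Hs.
  rewrite (feval_drop_var a j f), feval_upd. unfold zero_of in Hs.
  replace (IZR (coef j f) * (a j - _)) with (IZR (coef j f) * a j + feval a (drop_var j f)) in Hs
    by (field; auto).
  replace (IZR (coef j f) * (y - _)) with (IZR (coef j f) * y + feval b (drop_var j f)) in Hs
    by (field; auto).
  exact Hs.
Qed.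

Lemma eliminate_step j S a b B W : (0 <= W)%Z -> (forall f, In f S -> (fnorm f <= W)%Z) ->
  0 <= B -> (forall i, Rabs (b i) <= B) -> agree a b (eliminate j S) ->
  exists y, Rabs y <= IZR W * (B + 1) + 1 /\ agree a (upd b j y) S.
Proof.
  intros HW HS HB Hb Hab.
  set (T := filter (fun f => negb (Z.eqb (coef j f) 0)) S).
  assert (HT : forall f, In f T <-> In f S /\ coef j f <> 0%Z).
  { intros f. unfold T. rewrite filter_In, Bool.negb_true_iff, Z.eqb_neq. reflexivity. }
  destruct (exists_same_cut T (zero_of j a) (zero_of j b) (a j) (IZR W * (B + 1)))
    as [y [Hy Hcut]].
  - apply IZR_le in HW. nra.
  - intros f [Hf Hc]%HT. apply zero_of_bound; auto.
  - intros f g [Hf Hcf]%HT [Hg Hcg]%HT. apply zero_of_order; [assumption|assumption|].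
    apply Hab, in_or_app. right. now apply in_pairwise.
  - exists y. split; [exact Hy|]. intros f Hf.
    destruct (Z.eq_dec (coef j f) 0) as [Hc|Hc].
    + rewrite feval_upd, (feval_drop_var a j f), Hc, !Rmult_0_l, !Rplus_0_l.
      apply Hab, in_or_app. left. now apply in_map.
    + apply zero_of_cut; [assumption|]. apply Hcut, HT. now split.
Qed.

Lemma pow2_square_bound e :
  (2 * 2 ^ Z.of_nat e * 2 ^ Z.of_nat e + 1 <= 2 ^ Z.of_nat (2 * e + 2))%Z.
Proof.
  replace (Z.of_nat (2 * e + 2)) with (Z.of_nat e + Z.of_nat e + 2)%Z by lia.
  rewrite !Z.pow_add_r by lia.
  pose proof (Z.pow_pos_nonneg 2 (Z.of_nat e) ltac:(lia) ltac:(lia)). nia.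
Qed.

Lemma pow2_step_bound e k : 2 ^ e * (2 ^ k + 1) + 1 <= 2 ^ (e + k + 2).
Proof.
  rewrite !pow_add. pose proof (pow_R1_Rle 2 e ltac:(lra)).
  pose proof (pow_R1_Rle 2 k ltac:(lra)). simpl. nra.
Qed.

Lemma small_witness V : forall e S a, within V (2 ^ Z.of_nat e) S ->
  exists b, (forall i, Rabs (b i) <= 2 ^ ((2 ^ length V - 1) * (e + 2))) /\ agree a b S.
Proof.
  induction V as [|j V IH]; intros e S a HS.
  - exists (fun _ => 0). split.
    + intros i. simpl. rewrite Rabs_R0. lra.
    + intros f Hf. rewrite (feval_nil_vars a (fun _ => 0) f) by apply (HS f Hf).
      apply same_sign_refl.
  - set (k := ((2 ^ length V - 1) * (2 * e + 2 + 2))%nat).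
    assert (HS' : within V (2 ^ Z.of_nat (2 * e + 2)) (eliminate j S)).
    { eapply within_weaken; [apply pow2_square_bound|]. now apply eliminate_within. }
    destruct (IH _ _ a HS') as [b [Hb Hab]]. fold k in Hb.
    destruct (eliminate_step j S a b (2 ^ k) (2 ^ Z.of_nat e)) as [y [Hy Hay]];
      [lia|intros f Hf; apply (HS f Hf)|apply pow_le; lra|assumption|assumption|].
    rewrite <- pow_IZR in Hy.
    assert (Hexp : ((2 ^ length (j :: V) - 1) * (e + 2) = e + k + 2)%nat).
    { unfold k. simpl length. rewrite Nat.pow_succ_r'.
      pose proof (Nat.pow_le_mono_r 2 0 (length V) ltac:(lia) ltac:(lia)). simpl in H. nia. }
    exists (upd b j y). split; [|exact Hay].
    intros i. rewrite Hexp. pose proof (pow2_step_bound e k). unfold upd.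
    destruct (Nat.eqb i j); [lra|].
    apply Rle_trans with (2 ^ k); [apply Hb|apply Rle_pow; [lra|lia]].
Qed.

Fixpoint pieces (t : term) : list form :=
  match t with
  | TVar i => [([(i, 1%Z)], 0%Z)]
  | TZero => [([], 0%Z)]
  | TMinusOne => [([], (-1)%Z)]
  | TAdd t1 t2 => pairwise fadd (pieces t1) (pieces t2)
  | TNeg t1 => map (fscale (-1)) (pieces t1)
  | TMeet t1 t2 | TJoin t1 t2 => pieces t1 ++ pieces t2
  end.

Fixpoint term_tests (t : term) : list form :=
  match t with
  | TVar _ | TZero | TMinusOne => []
  | TAdd t1 t2 => term_tests t1 ++ term_tests t2
  | TNeg t1 => term_tests t1
  | TMeet t1 t2 | TJoin t1 t2 =>
      term_tests t1 ++ term_tests t2 ++ pairwise fsub (pieces t1) (pieces t2)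
  end.

Fixpoint formula_tests (Phi : oformula) : list form :=
  match Phi with
  | FAtom t1 t2 => term_tests t1 ++ term_tests t2 ++ pairwise fsub (pieces t1) (pieces t2)
  | FNot Psi => formula_tests Psi
  | FAnd Psi1 Psi2 | FOr Psi1 Psi2 => formula_tests Psi1 ++ formula_tests Psi2
  end.

Lemma teval_piece t a b : agree a b (term_tests t) ->
  exists p, In p (pieces t) /\ teval a t = feval a p /\ teval b t = feval b p.
Proof.
  induction t as [i| | |t1 IH1 t2 IH2|t IH|t1 IH1 t2 IH2|t1 IH1 t2 IH2]; simpl; intros H;
    try (eexists; split; [now left|unfold feval; simpl; split; ring]).
  - apply agree_app in H as [H1 H2].
    destruct (IH1 H1) as (p & Hp & Ea1 & Eb1), (IH2 H2) as (q & Hq & Ea2 & Eb2).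
    exists (fadd p q). split; [now apply in_pairwise|]. rewrite !feval_add. split; congruence.
  - destruct (IH H) as (p & Hp & Ea & Eb). exists (fscale (-1) p).
    split; [now apply in_map|]. rewrite !feval_scale, Ea, Eb. simpl (IZR (-1)). split; ring.
  - apply agree_app in H as [H1 [H2 H3]%agree_app].
    destruct (IH1 H1) as (p & Hp & Ea1 & Eb1), (IH2 H2) as (q & Hq & Ea2 & Eb2).
    pose proof (H3 _ (in_pairwise fsub _ _ p q Hp Hq)) as Hs. rewrite !feval_sub in Hs.
    rewrite Ea1, Eb1, Ea2, Eb2.
    destruct (Rmin_same_sign _ _ _ _ Hs) as [[-> ->]|[-> ->]];
      [exists p|exists q]; split; auto using in_or_app.
  - apply agree_app in H as [H1 [H2 H3]%agree_app].
    destruct (IH1 H1) as (p & Hp & Ea1 & Eb1), (IH2 H2) as (q & Hq & Ea2 & Eb2).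
    pose proof (H3 _ (in_pairwise fsub _ _ p q Hp Hq)) as Hs. rewrite !feval_sub in Hs.
    rewrite Ea1, Eb1, Ea2, Eb2.
    destruct (Rmax_same_sign _ _ _ _ Hs) as [[-> ->]|[-> ->]];
      [exists p|exists q]; split; auto using in_or_app.
Qed.

Lemma holds_agree Phi a b : agree a b (formula_tests Phi) -> (holds a Phi <-> holds b Phi).
Proof.
  induction Phi as [t1 t2|Psi IH|Psi1 IH1 Psi2 IH2|Psi1 IH1 Psi2 IH2]; simpl; intros H.
  - apply agree_app in H as [H1 [H2 H3]%agree_app].
    destruct (teval_piece t1 a b H1) as (p & Hp & -> & ->).
    destruct (teval_piece t2 a b H2) as (q & Hq & -> & ->).
    pose proof (H3 _ (in_pairwise fsub _ _ p q Hp Hq)) as Hs. rewrite !feval_sub in Hs.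
    unfold same_sign in Hs. split; intros; lra.
  - specialize (IH H). tauto.
  - apply agree_app in H as [H1 H2]. specialize (IH1 H1). specialize (IH2 H2). tauto.
  - apply agree_app in H as [H1 H2]. specialize (IH1 H1). specialize (IH2 H2). tauto.
Qed.

Fixpoint tvars (t : term) : list nat :=
  match t with
  | TVar i => [i]
  | TZero | TMinusOne => []
  | TAdd t1 t2 | TMeet t1 t2 | TJoin t1 t2 => tvars t1 ++ tvars t2
  | TNeg t1 => tvars t1
  end.

Fixpoint fvars (Phi : oformula) : list nat :=
  match Phi with
  | FAtom t1 t2 => tvars t1 ++ tvars t2
  | FNot Psi => fvars Psi
  | FAnd Psi1 Psi2 | FOr Psi1 Psi2 => fvars Psi1 ++ fvars Psi2
  end.

Lemma tvars_length t : (length (tvars t) <= tsize t)%nat.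
Proof. induction t; simpl; rewrite ?length_app; lia. Qed.

Lemma fvars_length Phi : (length (fvars Phi) <= fsize Phi)%nat.
Proof.
  induction Phi as [t1 t2| | |]; simpl; rewrite ?length_app; try lia.
  pose proof (tvars_length t1). pose proof (tvars_length t2). lia.
Qed.

Lemma tsize_pos t : (1 <= tsize t)%nat.
Proof. induction t; simpl; lia. Qed.

Lemma fsize_ge2 Phi : (2 <= fsize Phi)%nat.
Proof.
  induction Phi as [t1 t2| | |]; simpl; try lia.
  pose proof (tsize_pos t1). pose proof (tsize_pos t2). lia.
Qed.

Lemma within_pairwise_sub V n1 n2 P Q :
  within V (Z.of_nat n1) P -> within V (Z.of_nat n2) Q ->
  within V (Z.of_nat (n1 + n2)) (pairwise fsub P Q).
Proof. rewrite Nat2Z.inj_add. apply within_pairwise; [apply inV_sub|apply fnorm_sub]. Qed.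

Lemma within_app_sum V n1 n2 S1 S2 :
  within V (Z.of_nat n1) S1 -> within V (Z.of_nat n2) S2 ->
  within V (Z.of_nat (n1 + n2)) (S1 ++ S2).
Proof. intros H1 H2. apply within_app; eapply within_weaken; eauto; lia. Qed.

Lemma pieces_within t V : incl (tvars t) V -> within V (Z.of_nat (tsize t)) (pieces t).
Proof.
  induction t as [i| | |t1 IH1 t2 IH2|t IH|t1 IH1 t2 IH2|t1 IH1 t2 IH2]; simpl;
    intros HV; try apply incl_app_inv in HV as [HV1 HV2].
  - intros f [<-|[]]. split; [|reflexivity].
    intros p [<-|[]]. apply HV. now left.
  - intros f [<-|[]]. split; [intros p []|unfold fnorm; simpl; lia].
  - intros f [<-|[]]. split; [intros p []|reflexivity].
  - rewrite Nat2Z.inj_add. apply within_pairwise; auto using inV_add, fnorm_add.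
  - intros f [g [<- Hg]]%in_map_iff. destruct (IH HV g Hg).
    split; [now apply inV_scale|]. rewrite fnorm_scale. lia.
  - apply within_app_sum; auto.
  - apply within_app_sum; auto.
Qed.

Lemma term_tests_within t V : incl (tvars t) V -> within V (Z.of_nat (tsize t)) (term_tests t).
Proof.
  induction t as [i| | |t1 IH1 t2 IH2|t IH|t1 IH1 t2 IH2|t1 IH1 t2 IH2]; simpl;
    intros HV; try apply incl_app_inv in HV as [HV1 HV2]; try (intros f []); auto.
  - apply within_app_sum; auto.
  - apply within_app; [eapply within_weaken; [|apply IH1; auto]; lia|].
    apply within_app; [eapply within_weaken; [|apply IH2; auto]; lia|].
    apply within_pairwise_sub; auto using pieces_within.
  - apply within_app; [eapply within_weaken; [|apply IH1; auto]; lia|].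
    apply within_app; [eapply within_weaken; [|apply IH2; auto]; lia|].
    apply within_pairwise_sub; auto using pieces_within.
Qed.

Lemma formula_tests_within Phi V :
  incl (fvars Phi) V -> within V (Z.of_nat (fsize Phi)) (formula_tests Phi).
Proof.
  induction Phi as [t1 t2|Psi IH|Psi1 IH1 Psi2 IH2|Psi1 IH1 Psi2 IH2]; simpl;
    intros HV; try apply incl_app_inv in HV as [HV1 HV2]; auto using within_app_sum.
  apply within_app; [eapply within_weaken; [|apply term_tests_within; auto]; lia|].
  apply within_app; [eapply within_weaken; [|apply term_tests_within; auto]; lia|].
  apply within_pairwise_sub; auto using pieces_within.
Qed.

Lemma exponent_bound m N : (m <= N)%nat -> ((2 ^ m - 1) * (N + 2) <= 2 ^ (2 * N + 2))%nat.
Proof.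
  intros HmN. replace (2 * N + 2)%nat with (N + (N + 2))%nat by lia.
  rewrite Nat.pow_add_r. apply Nat.mul_le_mono.
  - pose proof (Nat.pow_le_mono_r 2 m N ltac:(lia) HmN). lia.
  - apply Nat.lt_le_incl, Nat.pow_gt_lin_r. lia.
Qed.

Lemma nbits_pow2 k : nbits (2 ^ Z.of_nat k) = (Z.of_nat k + 1)%Z.
Proof.
  unfold nbits. rewrite Z.abs_eq by (apply Z.pow_nonneg; lia).
  now rewrite Z.log2_pow2 by lia.
Qed.

Lemma log2R_ge_1 x : 2 <= x -> 1 <= log2R x.
Proof.
  intros Hx. unfold log2R. pose proof ln_lt_2 as Hln2.
  assert (ln 2 <= ln x).
  { destruct (Req_dec x 2) as [->|]; [lra|]. left. apply ln_increasing; lra. }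
  apply Rmult_le_reg_r with (ln 2); [lra|].
  unfold Rdiv. rewrite Rmult_assoc, Rinv_l; lra.
Qed.

Theorem mainTheorem3 :
  exists c : Z,
  forall (n : nat) (Phi : oformula),
    fvars_below n Phi ->
    (exists a : nat -> R, holds a Phi) ->
    exists (M : Z) (a : nat -> R),
      holds a Phi /\
      (forall i : nat, (i < n)%nat -> - powerRZ 2 M <= a i <= powerRZ 2 M) /\
      IZR (nbits M) <= IZR c * INR (fsize Phi) * log2R (INR (fsize Phi)).
Proof.
  exists 4%Z. intros n Phi _ [a Ha].
  set (N := fsize Phi).
  destruct (small_witness (fvars Phi) N (formula_tests Phi) a) as [b [Hb Hab]].
  { eapply within_weaken; [|apply formula_tests_within, incl_refl].
    pose proof (Z.pow_gt_lin_r 2 (Z.of_nat N)). lia. }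
  exists (2 ^ Z.of_nat (2 * N + 2))%Z, b. split; [|split].
  - now apply (holds_agree Phi a b Hab).
  - intros i _. apply Rabs_le_iff.
    rewrite <- (Nat2Z.inj_pow 2), <- pow_powerRZ.
    eapply Rle_trans; [apply Hb|]. apply Rle_pow; [lra|].
    apply exponent_bound, fvars_length.
  - assert (HN : 2 <= INR N) by (apply (le_INR 2), fsize_ge2).
    pose proof (log2R_ge_1 _ HN).
    rewrite nbits_pow2, plus_IZR, <- INR_IZR_INZ, plus_INR, mult_INR. simpl. nra.
Qed.
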